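(* Let $\lambda$ be a nonempty partition, $A=\mathcal{D}(\lambda)$ and $\ell=d(\lambda)$. Then $$\mathbb{SG}(A)=\mathbb{SG}(A[1,1])=\mathbb{SG}(A[2,2])=\cdots=\mathbb{SG}(A[\ell-1,\ell-1]).$$
   Context: A partition is a finite non-increasing sequence $\lambda=(\lambda_1,\dots,\lambda_r)$ of positive integers. Its Durfee length is $d(\lambda)=\max\{k:\lambda_k\ge k\}$. For non-negative integers $i,j$, $\lambda[i,j]$ is $(\lambda_{i+1}-j,\dots,\lambda_r-j)$ with all non-positive entries removed. Downright: positions $\mathcal{D}(\mu)$, $\mu$ nonempty with $s$ parts; move to $\mathcal{D}(\mu[1,0])$ allowed iff $s>1$, move to $\mathcal{D}(\mu[0,1])$ allowed iff $\mu_1>1$. For $A=\mathcal{D}(\lambda)$ write $A[i,j]=\mathcal{D}(\lambda[i,j])$. Normal play; $\mathbb{SG}(A)=\operatorname{mex}\{\mathbb{SG}(B):A\to B\}$. *)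

From mathcomp Require Import all_boot.
Set Implicit Arguments. Unset Strict Implicit. Unset Printing Implicit Defensive.

Definition is_partition (lam : seq nat) : bool :=
  sorted geq lam && all (fun x => 0 < x) lam.

(* Durfee length d(lam) = max {k : lam_k >= k} (1-indexed; lam_k = nth 0 lam (k-1)). *)
Definition durfee (lam : seq nat) : nat :=
  \max_(i < size lam | i.+1 <= nth 0 lam i) i.+1.

(* lam[i,j] = (lam_{i+1} - j, ..., lam_r - j) with non-positive entries removed. *)
Definition pshift (lam : seq nat) (i j : nat) : seq nat :=
  filter (fun x => 0 < x) (map (fun x => x - j) (drop i lam)).

Definition mex (s : seq nat) : nat :=
  find (fun k => k \notin s) (iota 0 (size s).+1).

(* Options of Downright position D(mu):
   D(mu[1,0]) if mu has > 1 parts, D(mu[0,1]) if mu_1 > 1. *)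
Fixpoint sg_fuel (n : nat) (mu : seq nat) : nat :=
  match n with
  | 0 => 0
  | n'.+1 =>
      mex ((if 1 < size mu then [:: sg_fuel n' (pshift mu 1 0)] else [::]) ++
           (if 1 < head 0 mu then [:: sg_fuel n' (pshift mu 0 1)] else [::]))
  end.

(* Sprague-Grundy value of D(mu); fuel = number of cells, which strictly
   decreases along every move, so the recursion is exact. *)
Definition SG (mu : seq nat) : nat := sg_fuel (sumn mu) mu.

From mathcomp Require Import all_boot.

Set Implicit Arguments.
Unset Strict Implicit.
Unset Printing Implicit Defensive.

(* Let [mu] be a partition with [mu_2 >= 2] and write [B = mu[1,0]], [C = mu[0,1]],
   [D = mu[1,1]].  Then [D] is an option of both [B] and [C], so [SG D] differs
   from [SG B] and [SG C].  The options of [D] are [B[1,1]] and [C[1,1]] (when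
   they exist), whose values are [SG B] and [SG C] by induction.  Hence
   [SG D = mex {SG B, SG C} = SG mu].  Inside the Durfee square the hypothesis
   [mu_2 >= 2] holds at every step of the diagonal walk [mu[i,i] -> mu[i+1,i+1]]. *)

Lemma has_notin_iota s : has (fun k => k \notin s) (iota 0 (size s).+1).
Proof.
apply/hasPn => in_s; have /uniq_leq_size : {subset iota 0 (size s).+1 <= s}.
  by move=> k /in_s; rewrite negbK.
by rewrite iota_uniq size_iota ltnn => /(_ isT).
Qed.

Lemma mex_lt s : mex s < (size s).+1.
Proof. by rewrite -[X in _ < X](size_iota 0) -has_find has_notin_iota. Qed.

Lemma mex_notin s : mex s \notin s.
Proof. by have := nth_find 0 (has_notin_iota s); rewrite nth_iota ?mex_lt. Qed.

Lemma mex_minimal s k : k < mex s -> k \in s.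
Proof.
move=> lt_k; have := before_find 0 lt_k.
by rewrite nth_iota ?(ltn_trans lt_k (mex_lt s)) // => /negbFE.
Qed.

Lemma mex_subset s s' : {subset s <= s'} -> mex s \notin s' -> mex s = mex s'.
Proof.
move=> sub_ss' notin; apply/eqP.
rewrite eqn_leq [mex s <= _]leqNgt [mex s' <= _]leqNgt (contraNN (@mex_minimal s' _) notin) andbT.
by apply: contraNN (mex_notin s') => /mex_minimal/sub_ss'.
Qed.

Lemma pshift_cons_succ x s i j : pshift (x :: s) i.+1 j = pshift s i j.
Proof. by []. Qed.

Lemma pshift_cons x s j : j < x -> pshift (x :: s) 0 j = (x - j) :: pshift s 0 j.
Proof. by move=> lt_jx; rewrite /pshift /= subn_gt0 lt_jx drop0. Qed.

Lemma pshift_nth s i j : j < nth 0 s i -> pshift s i j = (nth 0 s i - j) :: pshift s i.+1 j.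
Proof.
move=> lt_j; have lt_i : i < size s by rewrite ltnNge; apply: contraTN lt_j => /(nth_default 0) ->.
by rewrite /pshift (drop_nth 0 lt_i) /= subn_gt0 lt_j.
Qed.

Lemma pshift_pos s i j : all (fun x => 0 < x) (pshift s i j).
Proof. exact: filter_all. Qed.

Lemma pshift_id s : all (fun x => 0 < x) s -> pshift s 0 0 = s.
Proof. by move=> /all_filterP; rewrite /pshift drop0 (eq_map subn0) map_id. Qed.

Lemma pshift_nil s j : sorted geq s -> head 0 s <= j -> pshift s 0 j = [::].
Proof.
case: s => [|c r] //= sorted_s le_cj.
rewrite /pshift drop0; apply/eqP; rewrite -[_ == _]negbK -has_filter has_map.
apply/hasPn => x; rewrite inE /= subn_gt0 -leqNgt => /predU1P[-> //|x_in_r].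
exact: leq_trans (allP (order_path_min (rev_trans leq_trans) sorted_s) x x_in_r) le_cj.
Qed.

Lemma pshift_pshift s i j k : pshift (pshift s i j) 0 k = pshift s i (j + k).
Proof.
rewrite /pshift drop0; elim: (drop i s) => //= x t IH.
by rewrite subnDA; case: posnP => [->|_] /=; rewrite IH.
Qed.

Lemma sumn_pshift s i j : sumn (pshift s i j) <= sumn (drop i s).
Proof.
rewrite /pshift; elim: (drop i s) => //= x t IH.
by case: ifP => _ /=; [apply: leq_add (leq_subr _ _) IH | apply: leq_trans IH (leq_addl _ _)].
Qed.

Lemma is_partition_pshift s i j : is_partition s -> is_partition (pshift s i j).
Proof.
case/andP=> sorted_s _; rewrite /is_partition pshift_pos andbT.
apply: sorted_filter; first exact: rev_trans leq_trans.
by apply: homo_sorted (drop_sorted _ sorted_s) => x y; apply: leq_sub2r.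
Qed.

Definition options (mu : seq nat) : seq (seq nat) :=
  (if 1 < size mu then [:: pshift mu 1 0] else [::]) ++
  (if 1 < head 0 mu then [:: pshift mu 0 1] else [::]).

Lemma mem_options mu nu : (nu \in options mu) =
  (1 < size mu) && (nu == pshift mu 1 0) || (1 < head 0 mu) && (nu == pshift mu 0 1).
Proof. by rewrite mem_cat; do 2 case: ifP => _; rewrite ?inE ?andbT ?andbF. Qed.

Lemma sg_fuelS n mu : sg_fuel n.+1 mu = mex (map (sg_fuel n) (options mu)).
Proof. by rewrite /= /options; do 2 case: ifP. Qed.

Lemma is_partition_options mu nu :
  is_partition mu -> nu \in options mu -> is_partition nu.
Proof. by move=> part_mu; rewrite mem_options => /orP[]/andP[_ /eqP->]; apply: is_partition_pshift. Qed.

Lemma sumn_options mu nu : is_partition mu -> nu \in options mu -> sumn nu < sumn mu.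
Proof.
case: mu => [|x s]; first by rewrite mem_options.
case/andP=> _ /andP[x_gt0 _]; rewrite mem_options /=.
case/orP=> /andP[lt_1 /eqP->].
  rewrite pshift_cons_succ (leq_ltn_trans (sumn_pshift s 0 0)) // drop0.
  by rewrite -[X in X < _]add0n ltn_add2r.
rewrite pshift_cons ?(ltnW lt_1) //=.
by rewrite -addSn subn1 prednK // leq_add2l -{2}(drop0 s) sumn_pshift.
Qed.

Lemma sg_fuel_stable n m mu : is_partition mu ->
  sumn mu <= n -> sumn mu <= m -> sg_fuel n mu = sg_fuel m mu.
Proof.
have nil_of_sumn0 nu : is_partition nu -> sumn nu <= 0 -> nu = [::].
  by case: nu => [|x s] // /andP[_ /= /andP[x_gt0 _]]; rewrite leqn0 addn_eq0 eqn0Ngt x_gt0.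
elim: n m mu => [|n IH] [|m] mu part_mu // le_n le_m.
- by rewrite (nil_of_sumn0 _ part_mu le_n).
- by rewrite (nil_of_sumn0 _ part_mu le_m).
rewrite 2!sg_fuelS; congr mex; apply/eq_in_map => nu opt_nu.
have lt_nu := sumn_options part_mu opt_nu.
apply: IH (is_partition_options part_mu opt_nu) _ _; rewrite -ltnS.
- exact: leq_trans lt_nu le_n.
- exact: leq_trans lt_nu le_m.
Qed.

Lemma SG_options mu : is_partition mu -> SG mu = mex (map SG (options mu)).
Proof.
move=> part_mu; rewrite /SG; case: mu part_mu => [|x s] // part_mu.
have sumn_gt0 : 0 < sumn (x :: s).
  by case/andP: part_mu => _ /andP[x_gt0 _]; apply: ltn_addr.
rewrite -(prednK sumn_gt0) sg_fuelS; congr mex; apply/eq_in_map => nu opt_nu.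
apply: sg_fuel_stable (is_partition_options part_mu opt_nu) _ (leqnn _).
by rewrite -ltnS prednK // (sumn_options part_mu opt_nu).
Qed.

Lemma SG_option_neq mu nu : is_partition mu -> nu \in options mu -> SG nu != SG mu.
Proof.
move=> part_mu opt_nu; rewrite (SG_options part_mu).
by apply: contraNneq (mex_notin (map SG (options mu))) => <-; apply: map_f.
Qed.

Lemma SG_pshift11 mu : is_partition mu -> 1 < nth 0 mu 1 -> SG (pshift mu 1 1) = SG mu.
Proof.
have [n] := ubnP (sumn mu); elim: n mu => // n IH [|a [|b t]] // /ltnSE le_n part_mu /= lt_1b.
have /andP[/andP[le_ba path_bt] /and3P[_ b_gt0 pos_t]] := part_mu.
have lt_1a : 1 < a := leq_trans lt_1b le_ba.
set T := pshift t 0 1.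
have eB : pshift [:: a, b & t] 1 0 = b :: t by rewrite pshift_cons_succ pshift_id //= b_gt0.
have eC : pshift [:: a, b & t] 0 1 = [:: a - 1, b - 1 & T] by rewrite !pshift_cons.
have eD : pshift [:: a, b & t] 1 1 = (b - 1) :: T by rewrite pshift_cons_succ pshift_cons.
have optB : b :: t \in options [:: a, b & t] by rewrite mem_options eB eqxx.
have optC : [:: a - 1, b - 1 & T] \in options [:: a, b & t].
  by rewrite mem_options eC eqxx lt_1a orbT.
have part_D : is_partition ((b - 1) :: T) by rewrite -eD is_partition_pshift.
have IH_opt nu : nu \in options [:: a, b & t] -> 1 < nth 0 nu 1 -> SG (pshift nu 1 1) = SG nu.
  move=> opt_nu; apply: IH (is_partition_options part_mu opt_nu).
  exact: leq_trans (sumn_options part_mu opt_nu) le_n.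
rewrite eD (SG_options part_mu) (SG_options part_D).
have -> : options [:: a, b & t] = [:: b :: t; [:: a - 1, b - 1 & T]].
  by rewrite /options /= lt_1a eB eC.
apply: mex_subset => [_ /mapP[nu opt_nu ->] |].
  rewrite mem_options /= in opt_nu; rewrite !inE.
  case/orP: opt_nu => /andP[lt_1 /eqP->].
    rewrite pshift_cons_succ pshift_id ?pshift_pos // -(IH_opt _ optB) ?eqxx //=.
    by rewrite nth0 ltnNge; apply: contraTN lt_1; rewrite /T => /(pshift_nil (path_sorted path_bt)) ->.
  by rewrite -(IH_opt _ optC) // eqxx orbT.
have D_optB : (b - 1) :: T \in options (b :: t).
  by rewrite mem_options /= pshift_cons // eqxx lt_1b orbT.
have D_optC : (b - 1) :: T \in options [:: a - 1, b - 1 & T].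
  by rewrite mem_options pshift_cons_succ pshift_id /= ?subn_gt0 ?lt_1b ?pshift_pos ?eqxx.
rewrite !inE negb_or -(SG_options part_D).
by rewrite !SG_option_neq // (is_partition_options part_mu).
Qed.

Lemma durfee_lt_nth lam k : is_partition lam -> k < durfee lam -> k < nth 0 lam k.
Proof.
case/andP=> sorted_lam _; apply: contraTT; rewrite -!leqNgt => le_k.
apply/bigmax_leqP => i lt_i; rewrite ltnNge; apply/negP => le_ki.
have le_nth : nth 0 lam i <= nth 0 lam k.
  apply: (sorted_leq_nth (rev_trans leq_trans) leqnn) => //; rewrite inE //.
  exact: leq_ltn_trans le_ki (ltn_ord i).
by have := leq_trans lt_i (leq_trans le_nth (leq_trans le_k le_ki)); rewrite ltnn.
Qed.

Lemma pshift_diag_succ s i : i < nth 0 s i -> pshift (pshift s i i) 1 1 = pshift s i.+1 i.+1.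
Proof. by move=> lt_i; rewrite (pshift_nth lt_i) pshift_cons_succ pshift_pshift addn1. Qed.

Lemma nth_pshift_diag s i : i < nth 0 s i -> i.+1 < nth 0 s i.+1 -> 1 < nth 0 (pshift s i i) 1.
Proof.
move=> lt_i lt_Si; rewrite (pshift_nth lt_i) (pshift_nth (ltnW lt_Si)) /=.
by rewrite ltn_subRL addn1.
Qed.

Theorem mainTheorem7 (lam : seq nat) :
  is_partition lam -> lam != [::] ->
  forall i : nat, i < durfee lam -> SG (pshift lam i i) = SG lam.
Proof.
move=> part_lam _; elim=> [|i IH] lt_i.
  by rewrite pshift_id //; case/andP: part_lam.
have lt_nth_i := durfee_lt_nth part_lam (ltnW lt_i).
rewrite -(pshift_diag_succ lt_nth_i) SG_pshift11 ?IH ?(ltnW lt_i) ?is_partition_pshift //.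
exact: nth_pshift_diag (durfee_lt_nth part_lam lt_i).
Qed.
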